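(* Let $V:=\{\alpha\in\ell^\infty_w:\ G_{\tilde\psi,\psi}\alpha=\alpha\}$. Then $C_{\tilde\psi}$ maps $\mathcal H^\infty_w$ into $V$, and $C_{\tilde\psi}:(\mathcal H^\infty_w,\|\cdot\|_{\mathcal H^\infty_w})\to(V,\|\cdot\|_{\ell^\infty_w})$ is an isometric isomorphism (a linear, isometric bijection).
   Context: Standing setting. $\mathcal H$ is a separable complex Hilbert space with inner product $\langle\cdot,\cdot\rangle$, linear in the first and conjugate-linear in the second argument. $X$ is a countable index set. A weight is a map $w:X\to(0,\infty)$; $\ell^\infty_w$ is the Banach space of sequences $\alpha=(\alpha_k)_{k\in X}$ with $\|\alpha\|_{\ell^\infty_w}:=\sup_{k\in X}|\alpha_k|w(k)<\infty$. $\psi=(\psi_k)_{k\in X}$ is a frame for $\mathcal H$ and $\tilde\psi=(\tilde\psi_k)_{k\in X}$ is a dual frame, i.e. $f=\sum_{k}\langle f,\tilde\psi_k\rangle\psi_k=\sum_k\langle f,\psi_k\rangle\tilde\psi_k$ for all $f\in\mathcal H$ (unconditional convergence in $\mathcal H$). The cross Gram matrix $G_{\tilde\psi,\psi}$ has entries $(G_{\tilde\psi,\psi})_{k,l}=\langle\psi_l,\tilde\psi_k\rangle$ and acts by $(G_{\tilde\psi,\psi}\alpha)_k=\sum_{l\in X}\langle\psi_l,\tilde\psi_k\rangle\alpha_l$; it is assumed to define a bounded operator on $\ell^\infty_w$, meaning these series converge absolutely for every $\alpha\in\ell^\infty_w$ and $G_{\tilde\psi,\psi}:\ell^\infty_w\to\ell^\infty_w$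 is bounded (equivalently $\|G_{\tilde\psi,\psi}\|_{\mathcal B(\ell^\infty_w)}=\sup_{k}\sum_{l}|\langle\psi_l,\tilde\psi_k\rangle|\,w(k)/w(l)<\infty$). Let $\mathcal H^{00}:=\operatorname{span}\{\tilde\psi_k:k\in X\}$ (finite linear combinations), a dense subspace of $\mathcal H$. Equip $\mathcal H$ with the locally convex topology $\sigma(\mathcal H,\mathcal H^{00})$ generated by the seminorms $f\mapsto|\langle f,v\rangle|$, $v\in\mathcal H^{00}$ (Hausdorff and metrizable). Let $\overline{\mathcal H}$ be the completion of $\mathcal H$ in this topology, with $\mathcal H\subseteq\overline{\mathcal H}$, and for each $v\in\mathcal H^{00}$ let $f\mapsto\langle f,v\rangle_{\overline{\mathcal H},\mathcal H^{00}}$ be the unique continuous linear extension of $f\mapsto\langle f,v\rangle$ to $\overline{\mathcal H}$. Define $\mathcal H^\infty_w$ as the set of all $f\in\overline{\mathcal H}$ for which there is a sequence $(f_n)_{n\ge1}\subseteq\mathcal H$ converging to $f$ in $\sigma(\overline{\mathcal H},\mathcal H^{00})$ (i.e. $\langle f_n,v\rangle\to\langle f,v\rangle_{\overline{\mathcal H},\mathcal H^{00}}$ for all $v\in\mathcal H^{00}$) with $\sup_{n\in\mathbb N,k\in X}|\langle f_n,\tilde\psi_k\rangle|w(k)<\infty$. The coefficient operator is $C_{\tilde\psi}:\mathcal H^\infty_w\to\ell^\infty_w$, $C_{\tilde\psi}f=(\langle f,\tilde\psi_k\rangle_{\overline{\mathcal H},\mathcal H^{00}})_{k\in X}$, and the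 norm on $\mathcal H^\infty_w$ is $\|f\|_{\mathcal H^\infty_w}:=\|C_{\tilde\psi}f\|_{\ell^\infty_w}$. *)

From HB Require Import structures.
From mathcomp Require Import all_boot all_order all_algebra.
From mathcomp Require Import complex.
From mathcomp Require Import classical_sets reals.
Set Implicit Arguments. Unset Strict Implicit. Unset Printing Implicit Defensive.
Import Order.TTheory GRing.Theory Num.Theory.
Local Open Scope ring_scope.
Local Open Scope classical_set_scope.

Section Defs.
Variable R : realType.
Local Notation C := R[i].

Definition cabs (z : C) : R := Normc.normc z.

Definition cvgC (u : nat -> C) (l : C) : Prop :=
  forall eps : R, 0 < eps -> exists N : nat, forall n, (N <= n)%N -> cabs (u n - l) < eps.
Definition cauchyC (u : nat -> C) : Prop :=
  forall eps : R, 0 < eps -> exists N : nat, forall m n, (N <= m)%N -> (N <= n)%N ->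
    cabs (u m - u n) < eps.

Variable X : countType.

(* unconditional convergence of a complex series indexed by X:
   the net of finite partial sums converges to s *)
Definition has_sumC (a : X -> C) (s : C) : Prop :=
  forall eps : R, 0 < eps -> exists F0 : seq X, forall F : seq X,
    uniq F -> {subset F0 <= F} -> cabs (s - \sum_(k <- F) a k) < eps.

Variable H : lmodType C.
Variable ip : H -> H -> C.   (* inner product, linear in the first argument *)

Definition hnorm2 (f : H) : R := cabs (ip f f).

Definition is_inner_product : Prop :=
  [/\ forall (a : C) (f g h : H), ip (a *: f + g) h = a * ip f h + ip g h,
      forall f g : H, ip g f = conjc (ip f g),
      forall f : H, 0 <= ip f f &
      forall f : H, ip f f = 0 -> f = 0].

Definition is_separable_hilbert : Prop :=
  [/\ is_inner_product,
      (forall u : nat -> H,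
        (forall eps : R, 0 < eps -> exists N : nat, forall m n, (N <= m)%N -> (N <= n)%N ->
           hnorm2 (u m - u n) < eps) ->
        exists f : H, forall eps : R, 0 < eps -> exists N : nat, forall n, (N <= n)%N ->
           hnorm2 (u n - f) < eps) &
      exists d : nat -> H, forall (f : H) (eps : R), 0 < eps -> exists n, hnorm2 (f - d n) < eps].

Definition has_sumH (a : X -> H) (f : H) : Prop :=
  forall eps : R, 0 < eps -> exists F0 : seq X, forall F : seq X,
    uniq F -> {subset F0 <= F} -> hnorm2 (f - \sum_(k <- F) a k) < eps.

Definition is_frame (psi : X -> H) : Prop :=
  exists A B : R, [/\ 0 < A, 0 < B &
    forall f : H, exists s : R,
      has_sumC (fun k => (((cabs (ip f (psi k))) ^+ 2)%:C)%C) ((s%:C)%C) /\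
      A * hnorm2 f <= s <= B * hnorm2 f].

Definition is_dual_frame (psi psit : X -> H) : Prop :=
  [/\ is_frame psit,
      forall f : H, has_sumH (fun k => ip f (psit k) *: psi k) f &
      forall f : H, has_sumH (fun k => ip f (psi k) *: psit k) f].

Definition in_linfw (w : X -> R) (a : X -> C) : Prop :=
  exists M : R, forall k, cabs (a k) * w k <= M.
Definition linfw_norm (w : X -> R) (a : X -> C) : R :=
  sup (range (fun k => cabs (a k) * w k)).

(* the cross Gram matrix G_{psit,psi} is bounded on l^infty_w *)
Definition gram_bounded (psi psit : X -> H) (w : X -> R) : Prop :=
  exists M : R, forall (k : X) (F : seq X), uniq F ->
    \sum_(l <- F) cabs (ip (psi l) (psit k)) * w k / w l <= M.

Definition gram_fixed (psi psit : X -> H) (a : X -> C) : Prop :=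
  forall k : X, has_sumC (fun l => ip (psi l) (psit k) * a l) (a k).

Definition in_V (psi psit : X -> H) (w : X -> R) (a : X -> C) : Prop :=
  in_linfw w a /\ gram_fixed psi psit a.

Definition in_H00 (psit : X -> H) (v : H) : Prop :=
  exists (F : seq X) (c : X -> C), v = \sum_(k <- F) c k *: psit k.

(* (Hbar, iota, P) is a model of the completion of H with respect to
   sigma(H, H^00): Hbar is a complex vector space, iota : H -> Hbar the linear
   inclusion, and P g v = <g, v>_{Hbar,H00} the continuous extension of the
   pairing (only its values for v in H^00 are meaningful).  The topology of
   Hbar is the one generated by the seminorms g |-> |P g v|, v in H^00
   (metrizable), and Hbar is Hausdorff, contains H (sequentially) densely and is
   (sequentially) complete. *)
Definition is_weak_completion (psit : X -> H) (Hbar : lmodType C)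
    (iota : H -> Hbar) (P : Hbar -> H -> C) : Prop :=
  [/\ forall (a : C) (f g : H), iota (a *: f + g) = a *: iota f + iota g,
      forall (a : C) (g h : Hbar) (v : H), in_H00 psit v ->
        P (a *: g + h) v = a * P g v + P h v,
      forall (f v : H), in_H00 psit v -> P (iota f) v = ip f v,
      forall g h : Hbar, (forall v, in_H00 psit v -> P g v = P h v) -> g = h &
      ((forall g : Hbar, exists fn : nat -> H,
        forall v, in_H00 psit v -> cvgC (fun n => ip (fn n) v) (P g v)) /\
      (forall gn : nat -> Hbar, (forall v, in_H00 psit v -> cauchyC (fun n => P (gn n) v)) ->
        exists g : Hbar, forall v, in_H00 psit v -> cvgC (fun n => P (gn n) v) (P g v)))].

Definition in_Hinf (psit : X -> H) (w : X -> R) (Hbar : lmodType C)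
    (P : Hbar -> H -> C) (f : Hbar) : Prop :=
  exists fn : nat -> H,
    (forall v, in_H00 psit v -> cvgC (fun n => ip (fn n) v) (P f v)) /\
    exists M : R, forall (n : nat) (k : X), cabs (ip (fn n) (psit k)) * w k <= M.

Definition coef_op (psit : X -> H) (Hbar : lmodType C) (P : Hbar -> H -> C)
    (f : Hbar) : X -> C := fun k => P f (psit k).

Definition Hinf_norm (psit : X -> H) (w : X -> R) (Hbar : lmodType C)
    (P : Hbar -> H -> C) (f : Hbar) : R := linfw_norm w (coef_op psit P f).

End Defs.

From HB Require Import structures.
From mathcomp Require Import all_boot all_order all_algebra.
From mathcomp Require Import complex.
From mathcomp Require Import classical_sets reals.
From mathcomp Require Import ring lra.
Import Order.TTheory GRing.Theory Num.Theory.
Local Open Scope ring_scope.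
Set Implicit Arguments. Unset Strict Implicit.

(* For f in H, pairing the reconstruction formula f = sum_l <f, psit_l> psi_l
   with psit_k shows that the coefficient sequence of f is fixed by the Gram
   matrix.  For f in H^infty_w, approximated weakly by f_n with uniformly
   bounded coefficients, this identity passes to the limit by dominated
   convergence, the dominating sequence being a row of the Gram matrix, which
   is summable by boundedness of G on l^infty_w.  Conversely, for a in V the
   partial syntheses sum_(l < n) a_l psi_l have coefficients
   (G (a 1_{l<n}))_k, which stay bounded in l^infty_w and converge to a_k;
   they are therefore weakly Cauchy and converge in the completion to an
   element with coefficient sequence a.  Injectivity holds because an element
   of the completion is determined by its pairings with span {psit_k}, and
   the isometry is the definition of the norm of H^infty_w. *)

Section ComplexModulus.
Variable R : realType.
Local Notation C := R[i].

Lemma cabsE (z : C) : ((cabs z)%:C)%C = `|z|.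
Proof. by []. Qed.

Lemma cabs_ge0 (z : C) : 0 <= cabs z.
Proof. by rewrite -ler0c cabsE. Qed.

Lemma cabs0 : cabs (0 : C) = 0.
Proof. by apply: (@complexI _); rewrite cabsE normr0. Qed.

Lemma cabsN (z : C) : cabs (- z) = cabs z.
Proof. by apply: (@complexI _); rewrite !cabsE normrN. Qed.

Lemma cabsM (x y : C) : cabs (x * y) = cabs x * cabs y.
Proof. exact: Normc.normcM. Qed.

Lemma ler_cabsD (x y : C) : cabs (x + y) <= cabs x + cabs y.
Proof. by rewrite -lecR rmorphD /= !cabsE ler_normD. Qed.

Lemma cabs_distC (x y : C) : cabs (x - y) = cabs (y - x).
Proof. by rewrite -cabsN opprB. Qed.

Lemma ler_cabs_distD (x y z : C) : cabs (x - z) <= cabs (x - y) + cabs (y - z).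
Proof. by have := ler_cabsD (x - y) (y - z); rewrite addrA subrK. Qed.

Lemma ler_cabs_sum (I : Type) (s : seq I) (f : I -> C) :
  cabs (\sum_(i <- s) f i) <= \sum_(i <- s) cabs (f i).
Proof.
elim: s => [|x s IH]; first by rewrite !big_nil cabs0.
by rewrite !big_cons (le_trans (ler_cabsD _ _)) // lerD2l.
Qed.

Lemma mulcJ_cabs (z : C) : z * conjc z = ((cabs z ^+ 2)%:C)%C.
Proof.
case: z => a b; rewrite /cabs /= sqr_sqrtr ?addr_ge0 ?sqr_ge0 //.
by apply/eqP; rewrite eq_complex /=; apply/andP; split; apply/eqP; ring.
Qed.

Lemma eq0_cabs_le (z : C) : (forall e : R, 0 < e -> cabs z <= e) -> z = 0.
Proof.
move=> hz; apply: Normc.eq0_normc; apply/eqP.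
by rewrite eq_le cabs_ge0 andbT; apply/ler_addgt0Pr => e e0; rewrite add0r hz.
Qed.

End ComplexModulus.

Section ComplexSequences.
Variable R : realType.
Local Notation C := R[i].

Lemma eq_cvgC (u v : nat -> C) l : u =1 v -> cvgC u l -> cvgC v l.
Proof. by move=> uv hu e e0; have [N hN] := hu _ e0; exists N => n /hN; rewrite uv. Qed.

Lemma cvgCD (u v : nat -> C) l m : cvgC u l -> cvgC v m ->
  cvgC (fun n => u n + v n) (l + m).
Proof.
move=> hu hv e e0; have e2 : 0 < e / 2 by rewrite divr_gt0.
have [N1 h1] := hu _ e2; have [N2 h2] := hv _ e2.
exists (maxn N1 N2) => n; rewrite geq_max => /andP[/h1 hn1 /h2 hn2].
rewrite opprD addrACA (le_lt_trans (ler_cabsD _ _)) //; lra.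
Qed.

Lemma cvgCMl (c : C) (u : nat -> C) l : cvgC u l -> cvgC (fun n => c * u n) (c * l).
Proof.
move=> hu e e0; have c1 : 0 < cabs c + 1 by rewrite ltr_wpDl ?cabs_ge0.
have [N h] := hu _ (divr_gt0 e0 c1); exists N => n /h.
rewrite ltr_pdivlMr // -mulrBr cabsM => hn.
have := cabs_ge0 c; have := cabs_ge0 (u n - l); nra.
Qed.

Lemma cvgC_sum (I : Type) (s : seq I) (u : I -> nat -> C) (l : I -> C) :
  (forall i, cvgC (u i) (l i)) ->
  cvgC (fun n => \sum_(i <- s) u i n) (\sum_(i <- s) l i).
Proof.
move=> hu; elim: s => [|x s IH].
  by move=> e e0; exists 0%N => n _; rewrite !big_nil subrr cabs0.
rewrite big_cons; apply: (eq_cvgC (u := fun n => u x n + \sum_(i <- s) u i n)).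
  by move=> n; rewrite big_cons.
exact: cvgCD.
Qed.

Lemma cvgC_cabs_le (u : nat -> C) l B :
  cvgC u l -> (forall n, cabs (u n) <= B) -> cabs l <= B.
Proof.
move=> hu hB; apply/ler_addgt0Pr => e e0; have [N /(_ N (leqnn N))] := hu _ e0.
have := ler_cabs_distD l (u N) 0; rewrite !subr0 cabs_distC; have := hB N; lra.
Qed.

Lemma cvgC_unique (u : nat -> C) l m : cvgC u l -> cvgC u m -> l = m.
Proof.
move=> hl hm; apply/eqP; rewrite -subr_eq0; apply/eqP/eq0_cabs_le => e e0.
have e2 : 0 < e / 2 by rewrite divr_gt0.
have [N1 h1] := hl _ e2; have [N2 h2] := hm _ e2.
have := h1 _ (leq_maxl N1 N2); have := h2 _ (leq_maxr N1 N2).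
have := ler_cabs_distD l (u (maxn N1 N2)) m; rewrite (cabs_distC l (u _)); lra.
Qed.

Lemma cvgC_cauchy (u : nat -> C) l : cvgC u l -> cauchyC u.
Proof.
move=> hu e e0; have e2 : 0 < e / 2 by rewrite divr_gt0.
have [N h] := hu _ e2; exists N => m n /h hm /h hn.
have := ler_cabs_distD (u m) l (u n); rewrite (cabs_distC l (u _)); lra.
Qed.

End ComplexSequences.

Section InnerProduct.
Variable R : realType.
Local Notation C := R[i].
Variables (H : lmodType C) (ip : H -> H -> C).
Hypothesis ip_ax : is_inner_product ip.

Lemma ipDZl (a : C) f g h : ip (a *: f + g) h = a * ip f h + ip g h.
Proof. by case: ip_ax. Qed.

Lemma ipC f g : ip g f = conjc (ip f g).
Proof. by case: ip_ax. Qed.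

Lemma ip0l h : ip 0 h = 0.
Proof.
have := ipDZl 1 0 0 h; rewrite scaler0 addr0 mul1r => E.
by apply: (addrI (ip 0 h)); rewrite addr0 -E.
Qed.

Lemma ipZl (a : C) f h : ip (a *: f) h = a * ip f h.
Proof. by rewrite -[a *: f]addr0 ipDZl ip0l addr0. Qed.

Lemma ipDl f g h : ip (f + g) h = ip f h + ip g h.
Proof. by rewrite -[f]scale1r ipDZl mul1r scale1r. Qed.

Lemma ipBl f g h : ip (f - g) h = ip f h - ip g h.
Proof. by rewrite ipDl -scaleN1r ipZl mulN1r. Qed.

Lemma ip_suml (I : Type) (s : seq I) (F : I -> H) h :
  ip (\sum_(i <- s) F i) h = \sum_(i <- s) ip (F i) h.
Proof.
elim: s => [|x s IH]; first by rewrite !big_nil ip0l.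
by rewrite !big_cons ipDl IH.
Qed.

Lemma ipZr (a : C) f h : ip h (a *: f) = conjc a * ip h f.
Proof. by rewrite ipC ipZl rmorphM /= -ipC. Qed.

Lemma ipBr f g h : ip h (f - g) = ip h f - ip h g.
Proof. by rewrite ipC ipBl rmorphB /= -!ipC. Qed.

Lemma ip_sumr (I : Type) (s : seq I) (F : I -> H) h :
  ip h (\sum_(i <- s) F i) = \sum_(i <- s) ip h (F i).
Proof. by rewrite ipC ip_suml rmorph_sum /=; apply: eq_bigr => i _; rewrite -ipC. Qed.

Lemma ip_diag f : ip f f = ((hnorm2 ip f)%:C)%C.
Proof. by case: ip_ax => _ _ ip_ge0 _; rewrite /hnorm2 cabsE ger0_norm. Qed.

Lemma hnorm2_ge0 f : 0 <= hnorm2 ip f.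
Proof. exact: cabs_ge0. Qed.

(* Expand 0 <= <h - s<h,v> v, h - s<h,v> v> with s = 1 / (1 + ||v||^2); the
   extra 1 makes the bound uniform without a case split on v = 0. *)
Lemma cauchy_schwarz_le h v : cabs (ip h v) ^+ 2 <= (1 + hnorm2 ip v) * hnorm2 ip h.
Proof.
set z := ip h v; set c := hnorm2 ip v; set n := hnorm2 ip h; set q := cabs z ^+ 2.
have c0 : 0 <= c := hnorm2_ge0 v; have n0 : 0 <= n := hnorm2_ge0 h.
have q0 : 0 <= q by rewrite sqr_ge0.
set s := (1 + c)^-1; have s0 : 0 < s by rewrite invr_gt0 ltr_wpDr.
have sc1 : s * (1 + c) = 1 by rewrite mulVf // gt_eqF // ltr_wpDr.
have sc : s * c = 1 - s by rewrite -sc1; ring.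
have expand : ip (h - (s%:C)%C *: (z *: v)) (h - (s%:C)%C *: (z *: v)) =
    ((n - 2 * s * q + s ^+ 2 * q * c)%:C)%C.
  rewrite !ipBl !ipBr !ipZl !ipZr -/z (ipC h v) -/z !ip_diag -/c -/n.
  rewrite conjc_real.
  have -> : ((n - 2 * s * q + s ^+ 2 * q * c)%:C)%C =
      (n%:C - 2%:R * s%:C * (z * conjc z) + s%:C ^+ 2 * (z * conjc z) * c%:C)%C.
    by rewrite mulcJ_cabs !(rmorphB, rmorphD, rmorphM, rmorphXn, rmorph_nat).
  ring.
case: ip_ax => _ _ /(_ (h - (s%:C)%C *: (z *: v))) + _; rewrite expand ler0c.
have : s * q * c = q - s * q by rewrite -mulrA (mulrC q) mulrA sc; ring.
have : 0 <= s * q by rewrite mulr_ge0 // ltW.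
nra.
Qed.

Lemma ipl_small v eps : 0 < eps -> exists2 d, 0 < d &
  forall h, hnorm2 ip h < d -> cabs (ip h v) < eps.
Proof.
move=> e0; have c1 : 0 < 1 + hnorm2 ip v by rewrite ltr_wpDr ?hnorm2_ge0.
exists (eps ^+ 2 / (1 + hnorm2 ip v)); first by rewrite divr_gt0 ?exprn_gt0.
move=> h; rewrite ltr_pdivlMr // => hd.
have /(le_lt_trans (cauchy_schwarz_le h v)) : (1 + hnorm2 ip v) * hnorm2 ip h < eps ^+ 2.
  by rewrite mulrC.
by rewrite ltr_pXn2r // ?nnegrE ?cabs_ge0 ?ltW.
Qed.

End InnerProduct.

Section UnconditionalSums.
Variable R : realType.
Local Notation C := R[i].
Variable X : countType.
Variables (t : X -> R) (S : R).
Hypothesis t_ge0 : forall l, 0 <= t l.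
Hypothesis t_sum_le : forall F, uniq F -> \sum_(l <- F) t l <= S.

(* F0 is chosen so that its partial sum is within d of the supremum of all
   partial sums. *)
Lemma summable_tail_small d : 0 < d -> exists F0 : seq X,
  forall G, uniq G -> (forall l, l \in G -> l \notin F0) -> \sum_(l <- G) t l < d.
Proof.
move=> d0; pose E := [set x : R | exists F, uniq F /\ x = \sum_(l <- F) t l]%classic.
have hE : has_sup E.
  split; first by exists 0, [::]; rewrite big_nil.
  by exists S => x [F [uF ->]]; exact: t_sum_le.
have [_ [F0 [uF0 ->]] hF0] := sup_adherent d0 hE.
exists F0 => G uG hG.
have EF0G : E (\sum_(l <- F0 ++ G) t l).
  exists (F0 ++ G); split => //; rewrite cat_uniq uF0 uG andbT.
  by apply/hasPn => l /hG.
have := sup_upper_bound hE EF0G; rewrite big_cat /=; lra.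
Qed.

Variables (K : R) (d : nat -> X -> C).
Hypothesis d_dominated : forall n l, cabs (d n l) <= K * t l.

Lemma dominated_tail_small eps : 0 < eps -> exists F0 : seq X,
  forall n G, uniq G -> (forall l, l \in G -> l \notin F0) ->
    cabs (\sum_(l <- G) d n l) < eps.
Proof.
move=> e0; have K1 : 0 < `|K| + 1 by rewrite ltr_wpDl.
have [F0 hF0] := summable_tail_small (divr_gt0 e0 K1).
exists F0 => n G uG /(hF0 _ uG); rewrite ltr_pdivlMr // mulrC => hG.
apply: le_lt_trans (ler_cabs_sum _ _) (le_lt_trans _ hG).
rewrite mulr_sumr; apply: ler_sum => l _; apply: le_trans (d_dominated n l) _.
by rewrite ler_wpM2r // (le_trans (ler_norm K)) // lerDl.
Qed.

Lemma has_sumC_dominated_lim (e : X -> C) (sk : nat -> C) s :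
  (forall l, cvgC (fun n => d n l) (e l)) ->
  (forall n, has_sumC (d n) (sk n)) -> cvgC sk s -> has_sumC e s.
Proof.
move=> de dsum sk_s eps e0; have e4 : 0 < eps / 4 by rewrite divr_gt0.
have [F0 hF0] := dominated_tail_small e4.
have [N1 hN1] := sk_s _ e4.
exists F0 => F uF sF.
have [N2 hN2] := cvgC_sum F de e4.
set n := maxn N1 N2.
have [Fn hFn] := dsum n _ e4.
set G := undup [seq l <- Fn | l \notin F].
have uFG : uniq (F ++ G).
  rewrite cat_uniq uF undup_uniq andbT; apply/hasPn => l.
  by rewrite mem_undup mem_filter => /andP[].
have sFG : {subset Fn <= F ++ G}.
  by move=> l lFn; rewrite mem_cat mem_undup mem_filter lFn andbT orbN.
have G_off_F0 : forall l, l \in G -> l \notin F0.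
  move=> l; rewrite mem_undup mem_filter => /andP[lF _].
  by apply/negP => /sF; rewrite (negbTE lF).
have := hFn _ uFG sFG; rewrite big_cat /=.
have := hF0 n _ (undup_uniq _) G_off_F0; rewrite -/G.
have := hN1 n (leq_maxl _ _); have := hN2 n (leq_maxr _ _).
set A := \sum_(l <- F) d n l; set B := \sum_(l <- G) d n l.
set E := \sum_(l <- F) e l => hA hs hB hAB.
have -> : s - E = (- (sk n - s) + (sk n - (A + B))) + (B + (A - E)) by ring.
apply: le_lt_trans (ler_cabsD _ _) _.
have := ler_cabsD (- (sk n - s)) (sk n - (A + B)); have := ler_cabsD B (A - E).
rewrite cabsN; lra.
Qed.

End UnconditionalSums.

Section CountableEnumeration.
Variable R : realType.
Variable X : countType.

Definition enum_lt (n : nat) : seq X := pmap (@pickle_inv X) (iota 0 n).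

Lemma enum_lt_uniq n : uniq (enum_lt n).
Proof. exact: (pmap_uniq (@pickle_invK X) (iota_uniq 0 n)). Qed.

Lemma mem_enum_lt x n : (x \in enum_lt n) = (pickle x < n)%N.
Proof.
rewrite /enum_lt mem_pmap; apply/mapP/idP => [[m]|hx].
  rewrite mem_iota add0n => /andP[_ hm] E; have := @pickle_invK X m.
  by rewrite -E /= => ->.
by exists (pickle x); rewrite ?mem_iota ?add0n ?hx ?pickleK_inv.
Qed.

Lemma has_sumC_cvg_enum (b : X -> R[i]) s :
  has_sumC b s -> cvgC (fun n => \sum_(l <- enum_lt n) b l) s.
Proof.
move=> hb e e0; have [F0 hF0] := hb _ e0.
exists (\max_(x <- F0) (pickle x).+1)%N => n hn.
rewrite cabs_distC; apply: hF0; first exact: enum_lt_uniq.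
move=> x xF0; rewrite mem_enum_lt; apply: leq_trans hn.
exact: (@leq_bigmax_seq X F0 xpredT (fun x => (pickle x).+1) x xF0 isT).
Qed.

End CountableEnumeration.

Section CoefficientOperator.
Variable R : realType.
Local Notation C := R[i].
Variables (X : countType) (H : lmodType C) (ip : H -> H -> C).
Variables (psi psit : X -> H) (w : X -> R).
Variables (Hbar : lmodType C) (iota : H -> Hbar) (P : Hbar -> H -> C).
Hypothesis ip_ax : is_inner_product ip.
Hypothesis reconstruction : forall f : H, has_sumH ip (fun k => ip f (psit k) *: psi k) f.
Hypothesis w_gt0 : forall k, 0 < w k.
Variable MG : R.
Hypothesis gram_row_le : forall (k : X) (F : seq X), uniq F ->
  \sum_(l <- F) cabs (ip (psi l) (psit k)) * w k / w l <= MG.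
Hypothesis completion : is_weak_completion ip psit iota P.

Lemma in_H00_psit k : in_H00 psit (psit k).
Proof. by exists [:: k], (fun _ => 1); rewrite big_seq1 scale1r. Qed.

Lemma ip_span_psit (f : H) F c :
  ip f (\sum_(k <- F) c k *: psit k) = \sum_(k <- F) conjc (c k) * ip f (psit k).
Proof. by rewrite (ip_sumr ip_ax); apply: eq_bigr => k _; rewrite (ipZr ip_ax). Qed.

Lemma cvg_ip_H00 (fn : nat -> H) (a : X -> C) v : in_H00 psit v ->
  (forall k, cvgC (fun n => ip (fn n) (psit k)) (a k)) ->
  exists l, cvgC (fun n => ip (fn n) v) l.
Proof.
move=> [F [c ->]] fn_a; exists (\sum_(k <- F) conjc (c k) * a k).
apply: (eq_cvgC (u := fun n => \sum_(k <- F) conjc (c k) * ip (fn n) (psit k))).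
  by move=> n; rewrite ip_span_psit.
by apply: cvgC_sum => k; apply: cvgCMl.
Qed.

(* Pairings with H^00 are limits of pairings in H, and therefore inherit the
   antilinearity of the inner product in its second argument. *)
Lemma P_span_psit (g : Hbar) F c :
  P g (\sum_(k <- F) c k *: psit k) = \sum_(k <- F) conjc (c k) * P g (psit k).
Proof.
case: completion => _ _ _ _ [dense _]; have [fn fn_g] := dense g.
apply: (cvgC_unique (fn_g _ _)); first by exists F, c.
apply: (eq_cvgC (u := fun n => \sum_(k <- F) conjc (c k) * ip (fn n) (psit k))).
  by move=> n; rewrite ip_span_psit.
by apply: cvgC_sum => k; apply: cvgCMl; apply: fn_g; exact: in_H00_psit.
Qed.

Lemma coef_gram_fixed (f : H) k :
  has_sumC (fun l => ip (psi l) (psit k) * ip f (psit l)) (ip f (psit k)).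
Proof.
move=> eps e0; have [del d0 hdel] := ipl_small ip_ax (psit k) e0.
have [F0 hF0] := reconstruction f d0.
exists F0 => F uF sF; have := hdel _ (hF0 F uF sF).
rewrite (ipBl ip_ax) (ip_suml ip_ax); congr (cabs (_ - _) < _).
by apply: eq_bigr => l _; rewrite (ipZl ip_ax) mulrC.
Qed.

Lemma coef_op_in_V f : in_Hinf ip psit w P f -> in_V ip psi psit w (coef_op psit P f).
Proof.
move=> [fn [fn_f [M fn_le]]].
have fn_coef_le n l : cabs (ip (fn n) (psit l)) <= M / w l.
  by rewrite ler_pdivlMr.
split.
  exists M => k; rewrite -ler_pdivlMr //.
  exact: (cvgC_cabs_le (fn_f _ (in_H00_psit k))).
move=> k.
apply: (@has_sumC_dominated_lim R X (fun l => cabs (ip (psi l) (psit k)) / w l)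
   (MG / w k) _ _ M (fun n l => ip (psi l) (psit k) * ip (fn n) (psit l)) _
   _ (fun n => ip (fn n) (psit k))).
- by move=> l; rewrite divr_ge0 ?cabs_ge0 // ltW.
- move=> F uF; rewrite ler_pdivlMr // mulr_suml.
  by rewrite (eq_bigr _ (fun l _ => mulrAC _ _ (w k))); exact: gram_row_le.
- move=> n l; rewrite cabsM mulrCA.
  by apply: ler_wpM2l; [exact: cabs_ge0 | exact: fn_coef_le].
- by move=> l; apply: cvgCMl; exact: fn_f _ (in_H00_psit l).
- by move=> n; exact: coef_gram_fixed.
- exact: fn_f _ (in_H00_psit k).
Qed.

Lemma in_Hinf_linear (a : C) (f g : Hbar) :
  in_Hinf ip psit w P f -> in_Hinf ip psit w P g -> in_Hinf ip psit w P (a *: f + g).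
Proof.
case: completion => _ PDZl _ _ _ [fn [fn_f [Mf fn_le]]] [gn [gn_g [Mg gn_le]]].
exists (fun n => a *: fn n + gn n); split.
  move=> v v00; rewrite PDZl //.
  apply: (eq_cvgC (u := fun n => a * ip (fn n) v + ip (gn n) v)).
    by move=> n; rewrite (ipDZl ip_ax).
  by apply: cvgCD; [apply: cvgCMl; exact: fn_f | exact: gn_g].
exists (cabs a * Mf + Mg) => n k; rewrite (ipDZl ip_ax).
apply: le_trans (ler_wpM2r (ltW (w_gt0 k)) (ler_cabsD _ _)) _.
rewrite cabsM mulrDl -mulrA lerD //.
by apply: ler_wpM2l; [exact: cabs_ge0 | exact: fn_le].
Qed.

Lemma coef_op_linear (a : C) (f g : Hbar) k :
  coef_op psit P (a *: f + g) k = a * coef_op psit P f k + coef_op psit P g k.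
Proof.
by case: completion => _ PDZl _ _ _; rewrite /coef_op PDZl //; exact: in_H00_psit.
Qed.

Lemma coef_op_inj (f g : Hbar) : coef_op psit P f = coef_op psit P g -> f = g.
Proof.
case: completion => _ _ _ P_sep _ fg.
apply: P_sep => v [F [c ->]]; rewrite !P_span_psit; apply: eq_bigr => k _.
by rewrite -[P f _]/(coef_op psit P f k) fg.
Qed.

Section Synthesis.
Variable a : X -> C.
Hypothesis a_in_V : in_V ip psi psit w a.

Definition synth (n : nat) : H := \sum_(l <- enum_lt X n) a l *: psi l.

Lemma coef_synth n k :
  ip (synth n) (psit k) = \sum_(l <- enum_lt X n) ip (psi l) (psit k) * a l.
Proof.
rewrite (ip_suml ip_ax); apply: eq_bigr => l _.
by rewrite (ipZl ip_ax) mulrC.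
Qed.

Lemma cvg_coef_synth k : cvgC (fun n => ip (synth n) (psit k)) (a k).
Proof.
apply: (eq_cvgC (u := fun n => \sum_(l <- enum_lt X n) ip (psi l) (psit k) * a l)).
  by move=> n; rewrite coef_synth.
by case: a_in_V => _ /(_ k) /has_sumC_cvg_enum.
Qed.

Lemma coef_synth_bounded : exists M, forall n k,
  cabs (ip (synth n) (psit k)) * w k <= M.
Proof.
case: a_in_V => [[Ma a_le] _]; exists (`|Ma| * MG) => n k.
rewrite coef_synth.
apply: (@le_trans _ _
  ((\sum_(l <- enum_lt X n) cabs (ip (psi l) (psit k)) * (`|Ma| / w l)) * w k)).
  rewrite ler_pM2r //; apply: le_trans (ler_cabs_sum _ _) _.
  apply: ler_sum => l _; rewrite cabsM; apply: ler_wpM2l; first exact: cabs_ge0.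
  by rewrite ler_pdivlMr // (le_trans (a_le l)) // ler_norm.
rewrite mulr_suml (eq_bigr (fun l => `|Ma| * (cabs (ip (psi l) (psit k)) * w k / w l))).
  by rewrite -mulr_sumr; apply: ler_wpM2l => //; exact: gram_row_le (enum_lt_uniq _ _).
by move=> l _; ring.
Qed.

Lemma coef_op_surj : exists f, in_Hinf ip psit w P f /\ coef_op psit P f = a.
Proof.
case: completion => _ _ P_iota _ [_ complete].
have [g synth_g] : exists g : Hbar, forall v, in_H00 psit v ->
    cvgC (fun n => P (iota (synth n)) v) (P g v).
  apply: complete => v v00; have [l synth_l] := cvg_ip_H00 v00 cvg_coef_synth.
  by apply: (@cvgC_cauchy _ _ l); apply: eq_cvgC synth_l => n; rewrite P_iota.
have synth_g' v : in_H00 psit v -> cvgC (fun n => ip (synth n) v) (P g v).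
  by move=> v00; apply: eq_cvgC (synth_g _ v00) => n; rewrite P_iota.
exists g; split; first by exists synth; split; last exact: coef_synth_bounded.
apply: boolp.funext => k.
exact: cvgC_unique (synth_g' _ (in_H00_psit k)) (cvg_coef_synth k).
Qed.

End Synthesis.

End CoefficientOperator.

Theorem mainTheorem9 (R : realType) (X : countType) (H : lmodType R[i])
    (ip : H -> H -> R[i]) (psi psit : X -> H) (w : X -> R)
    (Hbar : lmodType R[i]) (iota : H -> Hbar) (P : Hbar -> H -> R[i]) :
  is_separable_hilbert ip ->
  is_frame ip psi ->
  is_dual_frame ip psi psit ->
  (forall k, 0 < w k) ->
  gram_bounded ip psi psit w ->
  is_weak_completion ip psit iota P ->
  [/\ (* C_{psit} maps H^infty_w into V *)
      forall f, in_Hinf ip psit w P f -> in_V ip psi psit w (coef_op psit P f),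
      (* H^infty_w is a subspace and C_{psit} is linear on it *)
      forall (a : R[i]) (f g : Hbar), in_Hinf ip psit w P f -> in_Hinf ip psit w P g ->
        in_Hinf ip psit w P (a *: f + g) /\
        forall k, coef_op psit P (a *: f + g) k = a * coef_op psit P f k + coef_op psit P g k,
      (* isometry *)
      forall f, in_Hinf ip psit w P f ->
        linfw_norm w (coef_op psit P f) = Hinf_norm psit w P f,
      (* injectivity on H^infty_w *)
      forall f g, in_Hinf ip psit w P f -> in_Hinf ip psit w P g ->
        coef_op psit P f = coef_op psit P g -> f = g &
      (* surjectivity onto V *)
      forall a : X -> R[i], in_V ip psi psit w a ->
        exists f, in_Hinf ip psit w P f /\ coef_op psit P f = a].
Proof.
move=> [ip_ax _ _] _ [_ reconstruction _] w_gt0 [MG gram_row_le] completion.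
split=> //.
- by move=> f; apply: (coef_op_in_V ip_ax reconstruction w_gt0 gram_row_le).
- move=> a f g f_in g_in; split.
    exact: (in_Hinf_linear ip_ax w_gt0 completion a f_in g_in).
  exact: (coef_op_linear completion a f g).
- by move=> f g _ _; apply: (coef_op_inj ip_ax completion).
- by move=> a; apply: (coef_op_surj ip_ax w_gt0 gram_row_le completion).
Qed.
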